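(* Let $T$ be a Galton–Watson tree with finite alphabet $\mathbb{A}$ and offspring distribution $W$ with $m=\mathbb{E}|W|>1$. For integers $k,a>0$ define $g_{k,a}(s)=\mathbb{P}(Z_k^{(s)}<a)$ for $s\in[0,1]$. Let $(a_k)_{k\in\mathbb{N}}$ be positive integers with $\limsup_{k\to\infty}a_k^{1/k}<m$. Then $g_{k,a_k}(s)\to\mathbb{P}(\text{extinction})$ as $k\to\infty$, for every $s\in(0,1)$.
   Context: The Galton–Watson tree with offspring distribution $W$ (random subset of $\mathbb{A}$, $\mathbb{P}(i\in W)>0$ for all $i$) is $T_0=\{\emptyset\}$, $T_n=\{aj:a\in T_{n-1},j\in W_a\}$, $(W_a)$ independent copies of $W$; extinction means $T_n=\emptyset$ for some $n$. $T_k^{(s)}=T_k\cap Y$ where $Y\subseteq\mathbb{A}^k$ is independent of $T$ with $\mathbb{P}(Y=B)=(1-s)^{|B|}s^{|\mathbb{A}^k\setminus B|}$; $Z_k^{(s)}=|T_k^{(s)}|$. *)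

From HB Require Import structures.
From mathcomp Require Import all_boot all_order all_algebra.
From mathcomp Require Import all_classical all_reals all_analysis.
Set Implicit Arguments. Unset Strict Implicit. Unset Printing Implicit Defensive.
Import Order.TTheory GRing.Theory Num.Theory.
Local Open Scope ring_scope.
Local Open Scope classical_set_scope.

(* Galton--Watson tree over a finite alphabet A, built from a family of
   offspring sets W : seq A -> Omega -> {set A} (W a = W_a, one per word a). *)
Fixpoint GW_level (A : finType) (Omega : Type) (W : seq A -> Omega -> {set A})
    (n : nat) (w : Omega) : {set n.-tuple A} :=
  match n return {set n.-tuple A} with
  | 0 => [set [tuple]]
  | n'.+1 => [set t : n'.+1.-tuple A |
      [exists a : n'.-tuple A, exists j : A,
        [&& a \in GW_level W n' w, j \in W (val a) w & val t == rcons (val a) j]]]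
  end.

Definition GW_extinct (A : finType) (Omega : Type) (W : seq A -> Omega -> {set A})
  : set Omega := [set w | exists n, GW_level W n w = finset.set0].

Definition mean_offspring (R : realType) (A : finType) (p : {set A} -> R) : R :=
  \sum_(S : {set A}) p S * #|S|%:R.

(* (W_a)_a are independent, each with law p: for pairwise distinct words
   a_1..a_r and sets S_1..S_r, P(W_{a_i} = S_i for all i) = prod p(S_i). *)
Definition iid_offspring d (Omega : measurableType d) (R : realType)
  (P : probability Omega R) (A : finType) (p : {set A} -> R)
  (W : seq A -> Omega -> {set A}) : Prop :=
  forall l : seq (seq A * {set A}), uniq (map fst l) ->
    P [set w | forall x, x \in l -> W x.1 w = x.2] = (\prod_(x <- l) p x.2)%:E.

(* Y is independent of (W_a)_a and P(Y = B) = (1-s)^|B| s^|A^k \ B| *)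
Definition site_percolation_indep d (Omega : measurableType d) (R : realType)
  (P : probability Omega R) (A : finType) (p : {set A} -> R)
  (W : seq A -> Omega -> {set A}) (s : R) (k : nat)
  (Y : Omega -> {set k.-tuple A}) : Prop :=
  forall (B : {set k.-tuple A}) (l : seq (seq A * {set A})), uniq (map fst l) ->
    P ([set w | Y w = B] `&` [set w | forall x, x \in l -> W x.1 w = x.2]) =
    ((1 - s) ^+ #|B| * s ^+ #|~: B| * \prod_(x <- l) p x.2)%:E.

(* Let f be the offspring generating function and q the extinction
   probability, the limit of f^k(0) = P(T_k = empty); q is a fixed point of f.
   Given the tree, the percolated level satisfies E[t^Z] = f^k(s + (1-s) t),
   where Z = |T_k :&: Y|.  The event {Z < a} contains {T_k = empty}, whence the
   lower bound f^k(0), and Markov's inequality for t^Z gives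
   P(Z < a) <= f^k(s + (1-s) t) + (1 - t^a).  Take t = 1 - c'^-k with
   a_k <= c^k and c < c' < m: then 1 - t^(a_k) <= (c/c')^k vanishes, and
   f^k(1 - (1-s) c'^-k) tends to q, because near 1 the iterates of f move away
   from 1 at a geometric rate close to m > c' and then contract to q.
   Probabilities of events determined by finitely many offspring sets are
   computed as iterated finite sums over the values of these sets. *)

From HB Require Import structures.
From mathcomp Require Import all_boot all_order all_algebra.
From mathcomp Require Import all_classical all_reals all_analysis.
From mathcomp Require Import lra ring zify.
Import Order.TTheory GRing.Theory Num.Theory.
Import numFieldNormedType.Exports.
Set Implicit Arguments. Unset Strict Implicit. Unset Printing Implicit Defensive.
Local Open Scope ring_scope.
Local Open Scope classical_set_scope.

Local Notation env A := (seq A -> {set A}).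

Section IidExpectation.
Variables (R : realType) (A : finType) (p : {set A} -> R).
Hypothesis p_ge0 : forall S, 0 <= p S.
Hypothesis p_sum1 : \sum_(S : {set A}) p S = 1.

Definition env_set (x : seq A) (S : {set A}) (g : env A) : env A :=
  fun y => if y == x then S else g y.

Definition env_merge (L : seq (seq A)) (g1 g2 : env A) : env A :=
  fun y => if y \in L then g1 y else g2 y.

(* Expectation of [F] when the offspring sets of the words of [L] are drawn
   independently with law [p]; the environment is empty outside [L]. *)
Fixpoint iid_expect (L : seq (seq A)) (F : env A -> R) : R :=
  match L with
  | [::] => F (fun _ => finset.set0)
  | x :: L' => \sum_(S : {set A}) p S * iid_expect L' (fun g => F (env_set x S g))
  end.

Lemma eq_iid_expect L F G : F =1 G -> iid_expect L F = iid_expect L G.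
Proof.
elim: L F G => [|x L IH] F G FG /=; first exact: FG.
by apply: eq_bigr => S _; congr (_ * _); apply: IH => g; exact: FG.
Qed.

Lemma iid_expectZ L c F : iid_expect L (fun g => c * F g) = c * iid_expect L F.
Proof.
elim: L F => [|x L IH] F //=; rewrite mulr_sumr; apply: eq_bigr => S _.
by rewrite (IH (fun g => F (env_set x S g))) mulrCA.
Qed.

Lemma iid_expect_sum L (I : Type) (r : seq I) (F : I -> env A -> R) :
  iid_expect L (fun g => \sum_(i <- r) F i g) = \sum_(i <- r) iid_expect L (F i).
Proof.
elim: L F => [|x L IH] F //=.
under eq_bigr => S _ do rewrite (IH (fun i g => F i (env_set x S g))) mulr_sumr.
by rewrite exchange_big.
Qed.

Lemma ler_iid_expect L F G : (forall g, F g <= G g) ->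
  iid_expect L F <= iid_expect L G.
Proof.
elim: L F G => [|x L IH] F G FG /=; first exact: FG.
by apply: ler_sum => S _; apply: ler_wpM2l => //; apply: IH => g; exact: FG.
Qed.

Lemma iid_expect_cst L c : iid_expect L (fun _ => c) = c.
Proof.
elim: L => [|x L IH] //=; under eq_bigr => S _ do rewrite IH.
by rewrite -mulr_suml p_sum1 mul1r.
Qed.

Lemma iid_expect_cat L1 L2 F : iid_expect (L1 ++ L2) F =
  iid_expect L1 (fun g1 => iid_expect L2 (fun g2 => F (env_merge L1 g1 g2))).
Proof.
elim: L1 F => [|x L1 IH] F /=.
  by apply: eq_iid_expect => g2; congr F; apply/funext => y; rewrite /env_merge in_nil.
apply: eq_bigr => S _; congr (_ * _); rewrite IH; apply: eq_iid_expect => g1.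
apply: eq_iid_expect => g2; congr F; apply/funext => y.
by rewrite /env_merge /env_set in_cons; case: (y == x).
Qed.

Lemma iid_expect_prod L (h : seq A -> {set A} -> R) : uniq L ->
  iid_expect L (fun g => \prod_(x <- L) h x (g x)) =
  \prod_(x <- L) \sum_S p S * h x S.
Proof.
elim: L => [|x L IH] /=; first by rewrite !big_nil.
case/andP => xL uL; rewrite big_cons mulr_suml; apply: eq_bigr => S _.
rewrite -mulrA; congr (_ * _); rewrite -IH // -iid_expectZ.
apply: eq_iid_expect => g.
rewrite big_cons /env_set eqxx; congr (_ * _); apply: eq_big_seq => y yL.
by case: eqP => // yx; rewrite -yx yL in xL.
Qed.

End IidExpectation.

Lemma expr1B_ge (R : realFieldType) n (x : R) : 0 <= x -> x <= 1 ->
  1 - n%:R * x <= (1 - x) ^+ n.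
Proof.
move=> x0 x1; elim: n => [|n IH]; first by rewrite expr0 mul0r subr0.
have n0 : 0 <= n%:R :> R by [].
rewrite exprS -natr1; apply: le_trans (_ : (1 - x) * (1 - n%:R * x) <= _).
  by nra.
by apply: ler_wpM2l => //; lra.
Qed.

Lemma expr1B_le (R : realFieldType) n (x : R) : 0 <= x -> x <= 1 ->
  (1 - x) ^+ n <= 1 - n%:R * x + (n%:R * x) ^+ 2.
Proof.
move=> x0 x1; elim: n => [|n IH]; first by rewrite expr0 mul0r subr0 expr0n /= addr0.
have n0 : 0 <= n%:R :> R by [].
rewrite exprS -natr1.
apply: le_trans (_ : (1 - x) * (1 - n%:R * x + (n%:R * x) ^+ 2) <= _).
  by apply: ler_wpM2l => //; lra.
by nra.
Qed.

Section Pgf.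
Variables (R : realType) (A : finType) (p : {set A} -> R).
Hypothesis p_ge0 : forall S, 0 <= p S.
Hypothesis p_sum1 : \sum_(S : {set A}) p S = 1.

Definition pgf (u : R) : R := \sum_(S : {set A}) p S * u ^+ #|S|.

Definition second_moment : R := \sum_(S : {set A}) p S * #|S|%:R ^+ 2.

Definition pgf_slope (u v : R) : R :=
  \sum_(S : {set A}) p S * \sum_(i < #|S|) v ^+ (#|S|.-1 - i) * u ^+ i.

Local Notation f := pgf.
Local Notation m := (mean_offspring p).

Lemma pgf_ge0 u : 0 <= u -> 0 <= f u.
Proof. by move=> u0; apply: sumr_ge0 => S _; rewrite mulr_ge0 // exprn_ge0. Qed.

Lemma pgf_le1 u : 0 <= u -> u <= 1 -> f u <= 1.
Proof.
move=> u0 u1; rewrite -p_sum1; apply: ler_sum => S _.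
by rewrite -[leRHS]mulr1 ler_wpM2l // exprn_ile1.
Qed.

Lemma pgf_le u v : 0 <= u -> u <= v -> f u <= f v.
Proof.
move=> u0 uv; apply: ler_sum => S _; rewrite ler_wpM2l // lerXn2r ?nnegrE //.
exact: le_trans uv.
Qed.

Lemma iter_pgf_ge0 n u : 0 <= u -> 0 <= iter n f u.
Proof. by move=> u0; elim: n => [|n IH] //=; exact: pgf_ge0. Qed.

Lemma iter_pgf_le n u v : 0 <= u -> u <= v -> iter n f u <= iter n f v.
Proof.
by move=> u0 uv; elim: n => [|n IH] //=; apply: pgf_le => //; exact: iter_pgf_ge0.
Qed.

Lemma continuous_pgf : continuous f.
Proof.
have -> : f = horner (\sum_(S : {set A}) p S *: 'X^#|S|).
  apply/funext => u; rewrite horner_sum.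
  by apply: eq_bigr => S _; rewrite hornerZ hornerXn.
exact: continuous_horner.
Qed.

Lemma pgf_subE u v : f v - f u = (v - u) * pgf_slope u v.
Proof.
rewrite /f /pgf_slope -sumrB mulr_sumr; apply: eq_bigr => S _.
by rewrite -mulrBr subrXX mulrCA.
Qed.

Lemma pgf_slope_ge0 u v : 0 <= u -> 0 <= v -> 0 <= pgf_slope u v.
Proof.
move=> u0 v0; apply: sumr_ge0 => S _; rewrite mulr_ge0 //.
by apply: sumr_ge0 => i _; rewrite mulr_ge0 // exprn_ge0.
Qed.

Lemma pgf_slope_le u v u' v' : 0 <= u -> u <= u' -> 0 <= v -> v <= v' ->
  pgf_slope u v <= pgf_slope u' v'.
Proof.
move=> u0 uu v0 vv; apply: ler_sum => S _; rewrite ler_wpM2l //.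
apply: ler_sum => i _; apply: ler_pM; rewrite ?exprn_ge0 // lerXn2r ?nnegrE //.
  exact: le_trans vv.
exact: le_trans uu.
Qed.

Lemma one_sub_pgf_ge x : 0 <= x -> x <= 1 ->
  m * x - second_moment * x ^+ 2 <= 1 - f (1 - x).
Proof.
move=> x0 x1.
have -> : 1 - f (1 - x) = \sum_S p S * (1 - (1 - x) ^+ #|S|).
  by rewrite -{1}p_sum1 /f -sumrB; apply: eq_bigr => S _; rewrite mulrBr mulr1.
rewrite /mean_offspring /second_moment !mulr_suml -sumrB; apply: ler_sum => S _.
rewrite -!mulrA -mulrBr ler_wpM2l //.
have := expr1B_le #|S| x0 x1; rewrite exprMn; lra.
Qed.

Lemma one_sub_pgf_ge_linear m' : m' < m -> exists2 delta, 0 < delta <= 1 &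
  forall z, 0 <= z -> z <= delta -> m' * z <= 1 - f (1 - z).
Proof.
move=> m'm; have K0 : 0 <= second_moment.
  by apply: sumr_ge0 => S _; rewrite mulr_ge0 // exprn_ge0.
pose e := (m - m') / (second_moment + 1).
have e0 : 0 < e by apply: divr_gt0; lra.
have eK : second_moment * e + e = m - m'.
  by rewrite -[RHS](@divfK _ (second_moment + 1)) /e; [ring | lra].
exists (Order.min 1 e); first by rewrite lt_min ltr01 e0 ge_min lexx.
move=> z z0; rewrite le_min => /andP[z1 ze].
have := one_sub_pgf_ge z0 z1.
have : second_moment * z ^+ 2 <= (m - m') * z.
  by rewrite expr2 mulrA ler_wpM2r //; nra.
lra.
Qed.

Lemma iter_pgf_escape m' delta x j : 1 <= m' -> 0 < delta -> delta <= 1 ->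
  (forall z, 0 <= z -> z <= delta -> m' * z <= 1 - f (1 - z)) ->
  0 <= x -> x <= 1 -> delta <= m' ^+ j * x -> iter j f (1 - x) <= 1 - delta.
Proof.
move=> m'1 d0 d1 lin x0 x1.
(* Invariant: the distance of the iterate to 1 is at least [min delta (m' ^+ j * x)]. *)
suff : 0 <= 1 - iter j f (1 - x) /\
    (delta <= 1 - iter j f (1 - x) \/ m' ^+ j * x <= 1 - iter j f (1 - x)).
  by case=> _ [] h dj; lra.
elim: j => [|j [z0 IH]] /=; first by rewrite expr0 mul1r; split; [lra | right; lra].
set z := 1 - iter j f (1 - x) in z0 IH *.
have -> : iter j f (1 - x) = 1 - z by rewrite /z; ring.
have z1 : z <= 1 by have := iter_pgf_ge0 j (_ : 0 <= 1 - x); rewrite /z; lra.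
split; first by have := pgf_le1 (_ : 0 <= 1 - z); lra.
have [dz|zd] := lerP delta z.
  left; have := lin delta (ltW d0) (lexx _).
  have : f (1 - z) <= f (1 - delta) by apply: pgf_le; lra.
  nra.
case: IH => IH; first lra.
right; have := lin z z0 (ltW zd); rewrite exprS -mulrA.
by apply: le_trans; rewrite ler_wpM2l //; lra.
Qed.

(* The chord slope of [f] between [q] and [y] is [< 1], and it bounds the
   contraction rate of the iteration on [[q, y]]. *)
Lemma iter_pgf_contract q y e : 0 <= q -> f q = q -> y <= 1 -> f y < y -> 0 < e ->
  exists r, iter r f y <= q + e.
Proof.
move=> q0 fq y1 fy e0.
have [yq|qy] := lerP y q; first by exists 0%N => /=; lra.
set rho := pgf_slope q y.
have rho0 : 0 <= rho by apply: pgf_slope_ge0; lra.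
have rho1 : rho < 1.
  have := pgf_subE q y; rewrite fq -/rho => frho.
  rewrite ltNge; apply/negP => r1.
  have : (y - q) * 1 <= (y - q) * rho by rewrite ler_wpM2l //; lra.
  lra.
have geom r : q <= iter r f y <= y /\ iter r f y - q <= (y - q) * rho ^+ r.
  elim: r => [|r [/andP[z0 z1] IH]] /=; first by rewrite expr0 mulr1 lexx ltW.
  set z := iter r f y in z0 z1 IH *.
  have fz : f z - q = (z - q) * pgf_slope q z by rewrite -{1}fq pgf_subE.
  have sz : pgf_slope q z <= rho by apply: pgf_slope_le; lra.
  have sz0 : 0 <= pgf_slope q z by apply: pgf_slope_ge0; lra.
  have qz : q <= f z by rewrite -{1}fq; apply: pgf_le.
  rewrite exprSr mulrA; split; first by apply/andP; nra.
  nra.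
have /cvgrPdist_lt/(_ e e0) [N _ HN] := @cvg_expr R rho (ltac:(rewrite ger0_norm //)).
exists N; have := HN N (leqnn N).
rewrite sub0r normrN ger0_norm ?exprn_ge0 // => rhoN.
have [_ h] := geom N; have : (y - q) * rho ^+ N <= rho ^+ N.
  by rewrite -[leRHS]mul1r ler_wpM2r ?exprn_ge0 //; lra.
lra.
Qed.

Lemma pgf_fixpoint_of_iter_cvg (u q : R) : (fun k => iter k f u) @ \oo --> q -> f q = q.
Proof.
move=> uq; have fuq : (f \o (fun k => iter k f u)) @ \oo --> f q.
  by apply: continuous_cvg => //; exact: continuous_pgf.
have uSq : (f \o (fun k => iter k f u)) @ \oo --> q.
  by move: uq; rewrite -(cvg_shiftS (fun k => iter k f u)).
exact: cvg_unique _ _ fuq uSq.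
Qed.

(* The iterates first move away from 1 at a geometric rate [m'] with
   [c < m' < m], reaching distance [delta] after about [k log c / log m']
   steps; the remaining steps, a positive fraction of [k], contract to [q]. *)
Lemma iter_pgf_near_one_le (q c y e : R) : 0 <= q -> f q = q ->
  1 <= c -> c < m -> 0 < y -> y <= 1 -> 0 < e ->
  \forall k \near \oo, iter k f (1 - y / c ^+ k) <= q + e.
Proof.
move=> q0 fq c1 cm y0 y1 e0.
pose m' := (c + m) / 2; have [cm' m'm] : c < m' /\ m' < m by rewrite /m'; split; lra.
have m'0 : 0 < m' by lra.
have [//|delta /andP[d0 d1] lin] := @one_sub_pgf_ge_linear m'.
have [r hr] : exists r, iter r f (1 - delta) <= q + e.
  apply: iter_pgf_contract q0 fq _ _ e0; first lra.
  by have := lin delta (ltW d0) (lexx _); nra.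
have cm'0 : 0 <= c / m' by rewrite divr_ge0 //; lra.
have cm'1 : `|c / m'| < 1 by rewrite ger0_norm // ltr_pdivrMr // mul1r.
have b0 : 0 < y / (delta * m' ^+ r) by rewrite divr_gt0 // mulr_gt0 // exprn_gt0.
have /cvgrPdist_lt/(_ _ b0) [N _ geo] := cvg_expr cm'1.
exists (N + r)%N => // k /= kN.
have [kN' kr] : (N <= k)%N /\ (r <= k)%N by split; clear -kN; lia.
have ck0 : 0 < c ^+ k by rewrite exprn_gt0 //; lra.
have x0 : 0 <= y / c ^+ k by rewrite divr_ge0 //; lra.
have x1 : y / c ^+ k <= 1 by rewrite ler_pdivrMr // mul1r (le_trans y1) // exprn_ege1.
rewrite -[in iter k](subnKC kr) iterD; apply: le_trans hr.
apply: iter_pgf_le; first by apply: iter_pgf_ge0; lra.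
apply: (iter_pgf_escape (ltW (le_lt_trans c1 cm')) d0 d1 lin x0 x1).
have := geo k kN'.
rewrite sub0r normrN ger0_norm ?exprn_ge0 // expr_div_n.
have -> : m' ^+ k = m' ^+ (k - r) * m' ^+ r by rewrite -exprD subnK.
rewrite ltr_pdivrMr ?mulr_gt0 ?exprn_gt0 //.
have -> : y / (delta * m' ^+ r) * (m' ^+ (k - r) * m' ^+ r) = m' ^+ (k - r) * y / delta.
  by field; rewrite ?gt_eqF ?exprn_gt0.
by rewrite ltr_pdivlMr // mulrA ler_pdivlMr // mulrC => /ltW.
Qed.

Lemma iter_pgf_near_one_cvg (q c y : R) : 1 <= c -> c < m -> 0 < y -> y <= 1 ->
  (fun k => iter k f 0) @ \oo --> q ->
  (fun k => iter k f (1 - y / c ^+ k)) @ \oo --> q.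
Proof.
move=> c1 cm y0 y1 cq.
have q0 : 0 <= q by apply: (cvgr_to_ge cq); apply: nearW => k; exact: iter_pgf_ge0.
have fq := pgf_fixpoint_of_iter_cvg cq.
apply/cvgrPdist_le => e e0.
have /cvgrPdist_le/(_ e e0) [N1 _ lower] := cq.
have [N2 _ upper] := iter_pgf_near_one_le q0 fq c1 cm y0 y1 e0.
exists (N1 + N2)%N => // k /= kN.
have [kN1 kN2] : (N1 <= k)%N /\ (N2 <= k)%N by split; clear -kN; lia.
have := lower k kN1; have := upper k kN2.
have : iter k f 0 <= iter k f (1 - y / c ^+ k).
  apply: iter_pgf_le => //; rewrite subr_ge0 ler_pdivrMr ?exprn_gt0 ?mul1r; try lra.
  by rewrite (le_trans y1) // exprn_ege1.
by rewrite /= !ler_distl; lra.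
Qed.

End Pgf.

Section TreeLevels.
Variable A : finType.

Definition env_level (g : env A) k : {set k.-tuple A} :=
  GW_level (fun x (_ : unit) => g x) k tt.

Definition words_of_size k : seq (seq A) := map val (enum {: k.-tuple A}).

Fixpoint words_lt k : seq (seq A) :=
  if k is k'.+1 then words_lt k' ++ words_of_size k' else [::].

Lemma mem_words_of_size k x : (x \in words_of_size k) = (size x == k).
Proof.
apply/mapP/eqP => [[t _ ->]|/eqP sx]; first exact: size_tuple.
by exists (Tuple sx); rewrite ?mem_enum.
Qed.

Lemma uniq_words_of_size k : uniq (words_of_size k).
Proof. by rewrite map_inj_uniq ?enum_uniq //; exact: val_inj. Qed.

Lemma mem_words_lt k x : (x \in words_lt k) = (size x < k)%N.
Proof.
elim: k => [|k IH] //=; rewrite mem_cat IH mem_words_of_size ltnS [in RHS]leq_eqVlt.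
by rewrite orbC.
Qed.

Lemma uniq_words_lt k : uniq (words_lt k).
Proof.
elim: k => [|k IH] //=; rewrite cat_uniq IH uniq_words_of_size /= andbT.
by apply/hasPn => x; rewrite mem_words_of_size mem_words_lt => /eqP ->; rewrite ltnn.
Qed.

Lemma env_levelS g k : env_level g k.+1 = [set t : k.+1.-tuple A |
  [exists a : k.-tuple A, exists j : A,
    [&& a \in env_level g k, j \in g (val a) & val t == rcons (val a) j]]]%SET.
Proof. by []. Qed.

Lemma GW_levelE (Omega : Type) (W : seq A -> Omega -> {set A}) k w :
  GW_level W k w = env_level (W^~ w) k.
Proof. by elim: k => [|k IH] //; rewrite env_levelS -IH. Qed.

Lemma GW_level_eq0S (Omega : Type) (W : seq A -> Omega -> {set A}) k w :
  GW_level W k w = finset.set0 -> GW_level W k.+1 w = finset.set0.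
Proof.
move=> Tk0 /=; apply/setP => t; rewrite !inE.
by apply/negbTE/existsP => -[a /existsP[j]]; rewrite Tk0 inE.
Qed.

Lemma eq_env_level k g g' : {in words_lt k, g =1 g'} ->
  env_level g k = env_level g' k.
Proof.
elim: k => [|k IH] gg' //; rewrite !env_levelS IH; last first.
  by move=> x; rewrite mem_words_lt => xk; apply: gg'; rewrite mem_words_lt ltnW.
apply/setP => t; rewrite !inE; apply: eq_existsb => a; apply: eq_existsb => j.
by rewrite gg' // mem_words_lt size_tuple.
Qed.

Lemma card_env_levelS g k :
  #|env_level g k.+1| = (\sum_(a in env_level g k) #|g (val a)|)%N.
Proof.
pose ext (aj : k.-tuple A * A) : k.+1.-tuple A := Tuple (rcons_tupleP aj.1 aj.2).
have -> : env_level g k.+1 = [set ext aj | aj in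
    [pred aj : k.-tuple A * A | (aj.1 \in env_level g k) && (aj.2 \in g (val aj.1))]]%SET.
  apply/setP => t; rewrite env_levelS inE; apply/existsP/imsetP.
    case=> a /existsP[j /and3P[aT jg /eqP tE]]; exists (a, j); first by rewrite inE /= aT.
    by apply: val_inj; rewrite tE.
  case=> [[a j]]; rewrite inE /= => /andP[aT jg] ->; exists a; apply/existsP; exists j.
  by rewrite aT jg /=.
rewrite card_imset; last first.
  by move=> [a j] [a' j'] /(congr1 val) /= /rcons_inj [/val_inj -> ->].
rewrite -sum1_card; under [RHS]eq_bigr => a _ do rewrite -sum1_card.
by rewrite pair_big_dep; apply: eq_bigl => -[a j]; rewrite inE.
Qed.

End TreeLevels.

(* Integrating out the offspring sets of level [k] first turns
   [u ^+ #|T_(k+1)|] into [f u ^+ #|T_k|]. *)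
Lemma iid_expect_level (R : realType) (A : finType) (p : {set A} -> R) k u :
  \sum_(S : {set A}) p S = 1 ->
  iid_expect p (words_lt A k) (fun g => u ^+ #|env_level g k|) = iter k (pgf p) u.
Proof.
move=> p_sum1; elim: k u => [|k IH] u; first by rewrite /= /env_level /= cards1 expr1.
rewrite iterSr -IH /= iid_expect_cat; apply: eq_iid_expect => g1.
set T := env_level g1 k.
pose h (x : seq A) (S : {set A}) := if x \in map val (enum T) then u ^+ #|S| else 1.
have levelS g2 : u ^+ #|env_level (env_merge (words_lt A k) g1 g2) k.+1| =
    \prod_(x <- words_of_size A k) h x (g2 x).
  rewrite card_env_levelS (@eq_env_level _ k _ g1); last first.
    by move=> x xk; rewrite /env_merge xk.
  rewrite -prodrXr /words_of_size big_map big_enum /= big_mkcond /=.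
  apply: eq_bigr => a _; rewrite /h (mem_map val_inj) mem_enum.
  by case: (a \in T); rewrite // /env_merge mem_words_lt size_tuple ltnn.
rewrite (eq_iid_expect _ _ levelS) iid_expect_prod ?uniq_words_of_size //.
rewrite -prodr_const [RHS]big_mkcond /words_of_size big_map big_enum /=.
apply: eq_bigr => a _; rewrite /h (mem_map val_inj) mem_enum.
by case: (a \in T) => //; under eq_bigr do rewrite mulr1.
Qed.

Lemma sum_set_prod_if (R : comRingType) (X : finType) (al be : X -> R) :
  \sum_(B : {set X}) \prod_x (if x \in B then al x else be x) =
  \prod_x (al x + be x).
Proof.
rewrite (eq_bigr (fun x => \sum_(b : bool) if b then al x else be x)); last first.
  by move=> x _; rewrite big_bool.
rewrite bigA_distr_bigA /= (reindex (fun B : {set X} => [ffun x => x \in B])) /=.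
  by apply: eq_bigr => B _; apply: eq_bigr => x _; rewrite ffunE.
exists (fun phi : {ffun X -> bool} => [set x | phi x]%SET) => [B _|phi _].
  by apply/setP => x; rewrite inE ffunE.
by apply/ffunP => x; rewrite ffunE inE.
Qed.

Definition perc_weight (R : ringType) (X : finType) (s : R) (B : {set X}) : R :=
  (1 - s) ^+ #|B| * s ^+ #|~: B|.

(* Generating function of [|T :&: Y|] for a site percolation [Y] with
   retention probability [1 - s]. *)
Lemma sum_perc_weight (R : comRingType) (X : finType) (T : {set X}) (s t : R) :
  \sum_(B : {set X}) perc_weight s B * t ^+ #|T :&: B| = (s + (1 - s) * t) ^+ #|T|.
Proof.
pose al x := (1 - s) * (if x \in T then t else 1).
transitivity (\prod_x (al x + s)); last first.
  rewrite -prodr_const [RHS]big_mkcond; apply: eq_bigr => x _; rewrite /al.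
  by case: (x \in T); [rewrite addrC | rewrite mulr1 subrK].
rewrite -sum_set_prod_if; apply: eq_bigr => B _.
have -> : \prod_x (if x \in B then al x else s) = \prod_(x in B) al x * s ^+ #|~: B|.
  rewrite (bigID (mem B)) /=; congr (_ * _); first by apply: eq_bigr => x ->.
  by rewrite -prodr_const; apply: eq_big => x; rewrite ?inE // => /negbTE ->.
rewrite /perc_weight mulrAC; congr (_ * _).
rewrite /al big_split /= prodr_const; congr (_ * _).
rewrite -prodr_const big_mkcond [RHS]big_mkcond; apply: eq_bigr => x _.
by rewrite inE; case: (x \in T); case: (x \in B).
Qed.

Lemma sum_perc_weight1 (R : comRingType) (X : finType) (s : R) :
  \sum_(B : {set X}) perc_weight s B = 1.
Proof.
have := sum_perc_weight (finset.set0 : {set X}) s 1; rewrite cards0 expr0 => <-.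
by apply: eq_bigr => B _; rewrite expr1n mulr1.
Qed.

Lemma measure_fin_bigcupT (R : realFieldType) d (T : ringOfSetsType d)
    (mu : {content set T -> \bar R}) (I : finType) (F : I -> set T) :
  (forall i, measurable (F i)) -> trivIset setT F ->
  mu (\bigcup_i F i) = (\sum_(i : I) mu (F i))%E.
Proof.
move=> mF tF; rewrite measure_fin_bigcup //; last exact: finite_finset.
rewrite (fsbigE (enum I)) ?enum_uniq //=; last by move=> i _; rewrite mem_enum.
by rewrite big_enum_cond /=; apply: eq_bigl => i; rewrite in_setT.
Qed.

Section EnvironmentEvents.
Variables (R : realType) (d : measure_display) (Omega : measurableType d)
  (P : probability Omega R) (A : finType) (p : {set A} -> R)
  (W : seq A -> Omega -> {set A}) (s : R) (k : nat) (Y : Omega -> {set k.-tuple A}).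
Hypothesis mW : forall x S, measurable [set w | W x w = S].
Hypothesis mY : forall B, measurable [set w | Y w = B].
Hypothesis indep : site_percolation_indep P p W s Y.

Definition offspring_fixed (l : seq (seq A * {set A})) : set Omega :=
  [set w | forall x, x \in l -> W x.1 w = x.2].

Definition env_override (l : seq (seq A * {set A})) (g : env A) : env A :=
  foldr (fun xS h => env_set xS.1 xS.2 h) g l.

Definition env_local (L : seq (seq A)) (E : env A -> bool) :=
  forall g g', {in L, g =1 g'} -> E g = E g'.

Lemma env_localS L L' E : {subset L <= L'} -> env_local L E -> env_local L' E.
Proof. by move=> LL' EL g g' gg'; apply: EL => x /LL'; exact: gg'. Qed.

Lemma offspring_fixed_cons x S l :
  offspring_fixed ((x, S) :: l) = [set w | W x w = S] `&` offspring_fixed l.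
Proof.
apply/seteqP; split => w /=.
  move=> wl; split => [|y yl]; first exact: (wl (x, S) (mem_head _ _)).
  by apply: wl; rewrite in_cons yl orbT.
by case=> wx wl y; rewrite in_cons => /orP[/eqP -> //|]; exact: wl.
Qed.

Lemma measurable_offspring_fixed l : measurable (offspring_fixed l).
Proof.
elim: l => [|[x S] l IH]; last by rewrite offspring_fixed_cons; exact: measurableI.
by rewrite (_ : offspring_fixed [::] = setT) //; apply/seteqP; split => w.
Qed.

Lemma env_override_agree l g w : offspring_fixed l w ->
  {in map fst l, W^~ w =1 env_override l g}.
Proof.
elim: l => [|[x S] l IH] //=; rewrite offspring_fixed_cons => -[wx wl] y.
by rewrite in_cons /env_set /=; case: eqP => [->|_] //= yl; exact: IH.
Qed.

Lemma env_override_set l x S g : x \notin map fst l ->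
  env_override l (env_set x S g) =1 env_set x S (env_override l g).
Proof.
elim: l => [|[z T] l IH] //=; rewrite in_cons negb_or => /andP[xz xl] y.
rewrite {1}/env_set IH // /env_set /=.
by case: (eqVneq y z) => [->|//]; rewrite eq_sym (negbTE xz).
Qed.

Let event B l (E : env A -> bool) :=
  [set w | Y w = B] `&` offspring_fixed l `&` [set w | E (W^~ w)].

Lemma env_event_prob0 l B E : uniq (map fst l) -> env_local (map fst l) E ->
  measurable (event B l E) /\
  P (event B l E) = (perc_weight s B * \prod_(x <- l) p x.2 *
                     (E (env_override l (fun _ => finset.set0)))%:R)%:E.
Proof.
move=> ul El; set b := E (env_override l _).
have -> : event B l E = if b then [set w | Y w = B] `&` offspring_fixed l else set0.
  apply/seteqP; split => w /=.
    by case=> -[wB wl]; rewrite /b -(El _ _ (env_override_agree _ wl)) => ->.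
  case: ifP => // bE [wB wl]; split => //.
  by rewrite /= (El _ _ (env_override_agree (fun=> finset.set0) wl)).
case: b; last by rewrite measure0 mulr0.
rewrite indep // mulr1; split => //.
by apply: measurableI => //; exact: measurable_offspring_fixed.
Qed.

Lemma env_event_prob L l B E : uniq L -> uniq (map fst l) ->
  {in L, forall x, x \notin map fst l} -> env_local (L ++ map fst l) E ->
  measurable (event B l E) /\
  P (event B l E) = (perc_weight s B * \prod_(x <- l) p x.2 *
                     iid_expect p L (fun g => (E (env_override l g))%:R))%:E.
Proof.
elim: L l E => [|x L IH] l E /= uL ul Ll El; first exact: env_event_prob0.
case/andP: uL => xL uL; have xl : x \notin map fst l by apply: Ll; rewrite mem_head.
have eventS S : measurable (event B ((x, S) :: l) E) /\
    P (event B ((x, S) :: l) E) = (perc_weight s B * \prod_(y <- (x, S) :: l) p y.2 *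
       iid_expect p L (fun g => (E (env_override ((x, S) :: l) g))%:R))%:E.
  apply: IH => //=; first by rewrite xl.
    move=> y yL; rewrite in_cons negb_or Ll ?in_cons ?yL ?orbT // andbT.
    by apply: contraNneq xL => <-.
  apply: env_localS El => y; rewrite /= !in_cons !mem_cat.
  by rewrite in_cons; case: (y == x); case: (y \in L); rewrite ?orbT.
have -> : event B l E = \bigcup_S event B ((x, S) :: l) E.
  apply/seteqP; split => w /=.
    by case=> -[wB wl] wE; exists (W x w) => //; rewrite /event offspring_fixed_cons.
  by case=> S _; rewrite /event offspring_fixed_cons => -[[wB [_ wl]] wE].
split.
  by apply: fin_bigcup_measurable => [|S _]; [exact: finite_finset|exact: (eventS S).1].
rewrite measure_fin_bigcupT => [|S|]; last 2 first.
- exact: (eventS S).1.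
- apply/trivIsetP => S S' _ _ SS'; apply/seteqP; split => w //=.
  rewrite /event !offspring_fixed_cons => -[[[_ [wS _]] _] [[_ [wS' _]] _]].
  by move: SS'; rewrite -wS -wS' eqxx.
rewrite (eq_bigr _ (fun S _ => (eventS S).2)).
rewrite sumEFin mulr_sumr; congr EFin; apply: eq_bigr => S _; rewrite big_cons /=.
rewrite (@eq_iid_expect _ _ _ _ (fun g => (E (env_override l (env_set x S g)))%:R)
  (fun g => (E (env_set x S (env_override l g)))%:R)).
  by rewrite /=; ring.
by move=> g; rewrite (funext (env_override_set _ _ xl)).
Qed.

Lemma prob_env_event (E : {set k.-tuple A} -> env A -> bool) :
  (forall B, env_local (words_lt A k) (E B)) ->
  measurable [set w | E (Y w) (W^~ w)] /\
  P [set w | E (Y w) (W^~ w)] =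
  (\sum_B perc_weight s B * iid_expect p (words_lt A k) (fun g => (E B g)%:R))%:E.
Proof.
move=> El; have sub : {subset words_lt A k <= words_lt A k ++ [::]}.
  by move=> y; rewrite cats0.
have eventB B := @env_event_prob (words_lt A k) [::] B (E B) (uniq_words_lt A k) isT
  (fun _ _ => isT) (env_localS sub (El B)).
have -> : [set w | E (Y w) (W^~ w)] = \bigcup_B event B [::] (E B).
  apply/seteqP; split => [w wE|w [B _ [[<- _]] //]].
  by exists (Y w) => //; do 2?split.
split.
  by apply: fin_bigcup_measurable => [|B _]; [exact: finite_finset|exact: (eventB B).1].
rewrite measure_fin_bigcupT => [|B|]; last 2 first.
- exact: (eventB B).1.
- apply/trivIsetP => B B' _ _ BB'; apply/seteqP; split => w //= [[[wB _] _] [[wB' _] _]].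
  by move: BB'; rewrite -wB -wB' eqxx.
rewrite (eq_bigr _ (fun B _ => (eventB B).2)) sumEFin; congr EFin.
by apply: eq_bigr => B _; rewrite big_nil mulr1.
Qed.

End EnvironmentEvents.

Section PercolatedLevel.
Variables (R : realType) (d : measure_display) (Omega : measurableType d)
  (P : probability Omega R) (A : finType) (p : {set A} -> R)
  (W : seq A -> Omega -> {set A}) (s : R) (k : nat) (Y : Omega -> {set k.-tuple A}).
Hypothesis p_ge0 : forall S, 0 <= p S.
Hypothesis p_sum1 : \sum_(S : {set A}) p S = 1.
Hypothesis mW : forall x S, measurable [set w | W x w = S].
Hypothesis mY : forall B, measurable [set w | Y w = B].
Hypothesis indep : site_percolation_indep P p W s Y.

Lemma prob_level_empty : measurable [set w | GW_level W k w = finset.set0] /\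
  P [set w | GW_level W k w = finset.set0] = (iter k (pgf p) 0)%:E.
Proof.
have -> : [set w | GW_level W k w = finset.set0] =
    [set w | (fun _ g => env_level g k == finset.set0) (Y w) (W^~ w)].
  by apply/seteqP; split => w /=; rewrite GW_levelE => /eqP.
have [|mE ->] := prob_env_event mW mY indep
  (E := fun _ g => env_level g k == finset.set0).
  by move=> B g g' gg'; rewrite (eq_env_level gg').
split => //; rewrite -(iid_expect_level _ _ p_sum1) -mulr_suml sum_perc_weight1 mul1r.
by congr EFin; apply: eq_iid_expect => g; rewrite expr0n cards_eq0.
Qed.

Lemma small_probE a : fine (P [set w | (#|GW_level W k w :&: Y w| < a)%N]) =
  \sum_B perc_weight s B *
    iid_expect p (words_lt A k) (fun g => (#|env_level g k :&: B| < a)%N%:R).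
Proof.
have -> : [set w | (#|GW_level W k w :&: Y w| < a)%N] =
    [set w | (fun B g => #|env_level g k :&: B| < a)%N (Y w) (W^~ w)].
  by apply/seteqP; split => w /=; rewrite GW_levelE.
have [|_ ->] // := prob_env_event mW mY indep
  (E := fun B g => #|env_level g k :&: B| < a)%N.
by move=> B g g' gg'; rewrite (eq_env_level gg').
Qed.

Hypothesis s01 : 0 < s < 1.

Lemma perc_weight_ge0 (B : {set k.-tuple A}) : 0 <= perc_weight s B.
Proof. by case/andP: s01 => s0 s1; rewrite mulr_ge0 ?exprn_ge0 // ?subr_ge0 ltW. Qed.

Lemma level_empty_le_small_prob a : (0 < a)%N ->
  iter k (pgf p) 0 <= fine (P [set w | (#|GW_level W k w :&: Y w| < a)%N]).
Proof.
move=> a0; rewrite small_probE -[leLHS]mul1r.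
rewrite -[X in X * _](sum_perc_weight1 (k.-tuple A) s) mulr_suml.
apply: ler_sum => B _; rewrite ler_wpM2l ?perc_weight_ge0 //.
rewrite -(iid_expect_level _ _ p_sum1); apply: (ler_iid_expect p_ge0) => g.
rewrite expr0n cards_eq0; case: eqP => [->|_]; last by case: (_ < _)%N.
by rewrite finset.set0I cards0 a0.
Qed.

(* Markov's inequality for [t ^+ Z] on [Z < a], combined with the
   generating function of the percolated level. *)
Lemma small_prob_le a t : 0 <= t -> t <= 1 ->
  fine (P [set w | (#|GW_level W k w :&: Y w| < a)%N]) <=
  iter k (pgf p) (s + (1 - s) * t) + (1 - t ^+ a).
Proof.
move=> t0 t1; rewrite small_probE; set g := (X in X <= _).
have g1 : g <= 1.
  rewrite -[leRHS](sum_perc_weight1 (k.-tuple A) s); apply: ler_sum => B _.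
  rewrite -[leRHS]mulr1 ler_wpM2l ?perc_weight_ge0 //.
  rewrite -[leRHS](iid_expect_cst p_sum1 (words_lt A k) 1).
  by apply: (ler_iid_expect p_ge0) => h; case: (_ < _)%N.
have markov : t ^+ a * g <= iter k (pgf p) (s + (1 - s) * t).
  rewrite -(iid_expect_level _ _ p_sum1) mulr_sumr.
  under [leRHS]eq_iid_expect do rewrite -sum_perc_weight.
  rewrite iid_expect_sum; apply: ler_sum => B _.
  rewrite [leRHS]iid_expectZ mulrCA ler_wpM2l ?perc_weight_ge0 // -iid_expectZ.
  apply: (ler_iid_expect p_ge0) => h.
  case: ltnP => [Za|_]; last by rewrite mulr0 exprn_ge0.
  rewrite mulr1 -(subnKC (ltnW Za)) exprD -[leRHS]mulr1 ler_wpM2l ?exprn_ge0 //.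
  exact: exprn_ile1.
have ta1 : t ^+ a <= 1 by exact: exprn_ile1.
nra.
Qed.

Lemma small_prob_le_geometric a c c' : 1 <= c' -> a%:R <= c ^+ k ->
  fine (P [set w | (#|GW_level W k w :&: Y w| < a)%N]) <=
  iter k (pgf p) (1 - (1 - s) / c' ^+ k) + (c / c') ^+ k.
Proof.
move=> c'1 ac; have c'k1 : 1 <= c' ^+ k by rewrite exprn_ege1.
have eps0 : 0 <= (c' ^+ k)^-1 by rewrite invr_ge0; lra.
have eps1 : (c' ^+ k)^-1 <= 1 by rewrite invf_le1 //; lra.
have t0 : 0 <= 1 - (c' ^+ k)^-1 by rewrite subr_ge0.
have t1 : 1 - (c' ^+ k)^-1 <= 1 by rewrite gerBl.
have := small_prob_le a t0 t1.
have -> : s + (1 - s) * (1 - (c' ^+ k)^-1) = 1 - (1 - s) / c' ^+ k by ring.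
move=> /le_trans; apply; rewrite lerD2l.
have := expr1B_ge a eps0 eps1 => bernoulli.
apply: le_trans (_ : a%:R * (c' ^+ k)^-1 <= _); first lra.
by rewrite [leRHS]expr_div_n; apply: ler_wpM2r.
Qed.

End PercolatedLevel.

Lemma extinction_prob_cvg (R : realType) (d : measure_display) (Omega : measurableType d)
    (P : probability Omega R) (A : finType) (p : {set A} -> R)
    (W : seq A -> Omega -> {set A}) (s : R) (Y : forall k, Omega -> {set k.-tuple A}) :
  \sum_(S : {set A}) p S = 1 -> (forall x S, measurable [set w | W x w = S]) ->
  (forall k B, measurable [set w | Y k w = B]) ->
  (forall k, site_percolation_indep P p W s (Y k)) ->
  (fun k => iter k (pgf p) 0) @ \oo --> fine (P (GW_extinct W)).
Proof.
move=> p_sum1 mW mY indep.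
pose F k := [set w | GW_level W k w = finset.set0].
have FE k := prob_level_empty p_sum1 mW (mY k) (indep k).
have extE : GW_extinct W = \bigcup_k F k.
  by apply/seteqP; split => w /= [n]; [exists n | exists n].
have F_homo : {homo F : n m / (n <= m)%N >-> (n <= m)%O}.
  move=> n m nm; rewrite subsetEset => w; rewrite /F /=.
  elim: m nm => [|m IH]; first by rewrite leqn0 => /eqP ->.
  by rewrite leq_eqVlt => /predU1P[-> //|nm Tn]; apply/GW_level_eq0S/IH.
have mext : measurable (\bigcup_k F k) by apply: bigcupT_measurable => k; exact: (FE k).1.
have PF : (fun k => (iter k (pgf p) 0)%:E) @ \oo --> P (GW_extinct W).
  rewrite extE (_ : (fun k => _) = P \o F).
    exact: nondecreasing_cvg_mu (fun k => (FE k).1) mext F_homo.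
  by apply/funext => k; rewrite /= (FE k).2.
have ext_fin : P (GW_extinct W) \is a fin_num by rewrite fin_num_measure // extE.
by move: PF; rewrite -(fineK ext_fin) => /fine_cvg.
Qed.

Lemma limn_esup_root_lt (R : realType) (u : nat -> R) (b : R) :
  (forall k, 0 <= u k) -> 1 < b ->
  (limn_esup (fun k => (powR (u k) k%:R^-1)%:E) < b%:E)%E ->
  exists c, [/\ 1 <= c, c < b & \forall k \near \oo, u k <= c ^+ k].
Proof.
move=> u0 b1; set v := fun k => _.
rewrite limn_esup_lim (cvg_lim _ (@cvg_esups_inf _ v)) //.
case/ereal_inf_lt => _ [N _ <-] vNb.
have v0 k : (0 <= v k)%E by rewrite lee_fin powR_ge0.
have v_le k : (N <= k)%N -> (v k <= esups v N)%E.
  by move=> Nk; apply: ereal_sup_ubound; exists k.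
have vN0 : (0 <= esups v N)%E by exact: le_trans (v0 N) (v_le N (leqnn N)).
have vN_fin : esups v N \is a fin_num by rewrite ge0_fin_numE // (lt_trans vNb) ?ltry.
set c := Num.max 1 (fine (esups v N)).
have c_ge0 : 0 <= c by rewrite le_max ler01.
exists c; split.
- by rewrite le_max lexx.
- by rewrite gt_max b1 -lte_fin fineK.
exists (maxn N 1) => // k /=; rewrite geq_max => /andP[Nk k0].
have -> : u k = (u k `^ k%:R^-1) ^+ k.
  by rewrite -powR_mulrn ?powR_ge0 // -powRrM mulVf ?powRr1 // pnatr_eq0 -lt0n.
rewrite lerXn2r ?nnegrE ?powR_ge0 // le_max; apply/orP; right.
by rewrite -lee_fin fineK // v_le.
Qed.

Theorem lemma4p3 (R : realType) (d : measure_display) (Omega : measurableType d)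
  (P : probability Omega R) (A : finType) (p : {set A} -> R)
  (W : seq A -> Omega -> {set A})
  (Y : R -> forall k : nat, Omega -> {set k.-tuple A})
  (a : nat -> nat) :
  (forall S, 0 <= p S) ->
  \sum_(S : {set A}) p S = 1 ->
  (forall i : A, 0 < \sum_(S : {set A} | i \in S) p S) ->
  (forall (x : seq A) (S : {set A}), measurable [set w | W x w = S]) ->
  iid_offspring P p W ->
  (forall s k (B : {set k.-tuple A}), measurable [set w | Y s k w = B]) ->
  (forall s k, 0 < s < 1 -> site_percolation_indep P p W s (Y s k)) ->
  1 < mean_offspring p ->
  (forall k, (0 < a k)%N) ->
  (limn_esup (fun k => (powR (a k)%:R (k%:R)^-1)%:E) < (mean_offspring p)%:E)%E ->
  forall s : R, 0 < s < 1 ->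
    (fun k => fine (P [set w | (#|GW_level W k w :&: Y s k w| < a k)%N]))
      @ \oo --> fine (P (GW_extinct W)).
Proof.
move=> p_ge0 p_sum1 _ mW _ mY indep m_gt1 a_gt0 a_root s s01.
have ext := extinction_prob_cvg p_sum1 mW (mY s) (fun k => indep s k s01).
have [c [c1 cm [N _ a_le]]] := limn_esup_root_lt (fun k => ler0n _ (a k)) m_gt1 a_root.
pose c' := (c + mean_offspring p) / 2.
have [cc' c'm] : c < c' /\ c' < mean_offspring p by rewrite /c'; split; lra.
have upper : (fun k => iter k (pgf p) (1 - (1 - s) / c' ^+ k) + (c / c') ^+ k)
    @ \oo --> fine (P (GW_extinct W)).
  rewrite -[fine _]addr0; apply: cvgD; first by apply: iter_pgf_near_one_cvg => //; lra.
  by apply: cvg_expr; rewrite ger0_norm ?divr_ge0 ?ltr_pdivrMr ?mul1r //; lra.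
apply: (squeeze_cvgr _ ext upper); exists N => // k /= Nk.
rewrite (level_empty_le_small_prob p_ge0 p_sum1 mW (mY s k) (indep s k s01) s01) //=.
apply: (small_prob_le_geometric p_ge0 p_sum1 mW (mY s k) (indep s k s01) s01).
  by rewrite /c'; lra.
exact: a_le.
Qed.
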